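(* Let $A$ be a ring such that (1) every element of $A$ is nilpotent or regular, and (2) $\mathrm{Jac}_A 0\subseteq \mathrm{Nil}_A 0$. Let $I$ be an ideal of $A$ such that $\mathrm{Jac}_A I$ contains some regular element. Then the double negation of ''$I$ contains a regular element'' holds, i.e. it is not the case that $I$ contains no regular element.
   Context: All rings are commutative with identity. The setting is constructive mathematics: no law of excluded middle and no Zorn's lemma, so ''or'' is a constructive disjunction. An element is regular if it is a non-zero-divisor. For a ring $A$ and a subset $U\subseteq A$, $\langle U\rangle_A$ denotes the ideal generated by $U$. Define $\mathrm{Nil}_A U:=\{a\in A:\exists n\ge 0,\ a^n\in\langle U\rangle_A\}$ and $\mathrm{Jac}_A U:=\{a\in A:\forall b\in A,\ 1\in\langle U\cup\{1-ab\}\rangle_A\}$. *)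

From mathcomp Require Import all_boot all_algebra.
Set Implicit Arguments. Unset Strict Implicit. Unset Printing Implicit Defensive.
Import GRing.Theory.
Local Open Scope ring_scope.

(* Commutative rings with identity (the zero ring is allowed). *)
Section Defs.
Variable A : comPzRingType.

Definition regular (a : A) : Prop := forall b : A, a * b = 0 -> b = 0.

Definition nilpotent_el (a : A) : Prop := exists n : nat, a ^+ n = 0.

Definition is_ideal (I : A -> Prop) : Prop :=
  [/\ I 0, (forall x y, I x -> I y -> I (x + y)) & (forall a x, I x -> I (a * x))].

Definition gen_ideal (U : A -> Prop) (x : A) : Prop :=
  exists (n : nat) (c u : 'I_n -> A),
    (forall i, U (u i)) /\ x = \sum_(i < n) c i * u i.

Definition NilA (U : A -> Prop) (a : A) : Prop :=
  exists n : nat, gen_ideal U (a ^+ n).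

Definition JacA (U : A -> Prop) (a : A) : Prop :=
  forall b : A, gen_ideal (fun x => U x \/ x = 1 - a * b) 1.

Definition zero_set (x : A) : Prop := x = 0.
End Defs.

From mathcomp Require Import all_boot all_algebra.
Set Implicit Arguments. Unset Strict Implicit. Unset Printing Implicit Defensive.
Import GRing.Theory.
Local Open Scope ring_scope.

(* If I contained no regular element, every element of I would be nilpotent.
   For r in Jac I and any b, write 1 = i + d (1 - r b) with i in I; as 1 - i is a
   unit (geometric series), so is 1 - r b, hence r lies in Jac 0 ⊆ Nil 0.  A
   regular nilpotent element forces 1 = 0, and then 0 ∈ I is regular: a
   contradiction.  Only the double negation is obtained, since "I has no regular
   element" cannot be turned into a regular witness constructively. *)

Section JacobsonNil.
Variable A : comPzRingType.
Implicit Types (I U : A -> Prop) (a r v x : A).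

Lemma gen_ideal_mul U a u : U u -> gen_ideal U (a * u).
Proof.
by move=> Uu; exists 1%N, (fun=> a), (fun=> u); split; rewrite ?big_ord1.
Qed.

Lemma gen_ideal_idealU1 I v x :
  is_ideal I -> gen_ideal (fun y => I y \/ y = v) x ->
  exists i d, I i /\ x = i + d * v.
Proof.
move=> [I0 ID IM] [n [c [u [Uu ->]]]].
elim: n c u Uu => [|n IHn] c u Uu.
  by exists 0, 0; rewrite big_ord0 mul0r addr0.
rewrite big_ord_recl.
have [i [d [Ii ->]]] :=
  IHn (c \o lift ord0) (u \o lift ord0) (fun k => Uu (lift ord0 k)).
case: (Uu ord0) => [Iu0|->].
  exists (c ord0 * u ord0 + i), d; split; last by rewrite addrA.
  by apply: ID => //; apply: IM.
by exists i, (c ord0 + d); split; rewrite // mulrDl addrCA.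
Qed.

Lemma subr1_nilpotent_inv x m : x ^+ m = 0 -> (1 - x) * \sum_(k < m) x ^+ k = 1.
Proof. by move=> xm0; rewrite -opprB mulNr -subrX1 xm0 sub0r opprK. Qed.

Lemma regular_nilpotent_trivial r : regular r -> nilpotent_el r -> (1 : A) = 0.
Proof.
move=> reg_r [n]; elim: n => [|n IHn]; first by rewrite expr0.
by rewrite exprS => /reg_r.
Qed.

Lemma trivial_regular a : (1 : A) = 0 -> regular a.
Proof. by move=> one0 b _; rewrite -[b]mulr1 one0 mulr0. Qed.

Lemma NilA_zero_set a : NilA (@zero_set A) a -> nilpotent_el a.
Proof.
move=> [n [k [c [u [u0 an]]]]]; exists n.
by rewrite an big1 // => j _; rewrite (u0 j) mulr0.
Qed.

Lemma JacA_nil_ideal I r :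
  is_ideal I -> (forall x, I x -> nilpotent_el x) ->
  JacA I r -> JacA (@zero_set A) r.
Proof.
move=> idI nilI Jr b.
have [i [d [Ii E]]] := gen_ideal_idealU1 idI (Jr b).
have [m im0] := nilI _ Ii.
have dE : d * (1 - r * b) = 1 - i.
  by apply/eqP; rewrite eq_sym subr_eq [_ + i]addrC -E.
have inv : ((\sum_(k < m) i ^+ k) * d) * (1 - r * b) = 1.
  by rewrite -mulrA dE mulrC subr1_nilpotent_inv.
by rewrite -[X in gen_ideal _ X]inv; apply: gen_ideal_mul; right.
Qed.

End JacobsonNil.

Theorem mainTheorem14 (A : comPzRingType) (I : A -> Prop) :
  (forall a : A, nilpotent_el a \/ regular a) ->
  (forall a : A, JacA (@zero_set A) a -> NilA (@zero_set A) a) ->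
  is_ideal I ->
  (exists r : A, JacA I r /\ regular r) ->
  ~ ~ (exists r : A, I r /\ regular r).
Proof.
move=> nil_or_reg Jac0_Nil0 idI [r [Jr reg_r]] noreg.
have nilI x : I x -> nilpotent_el x.
  by move=> Ix; case: (nil_or_reg x) => // reg_x; case: noreg; exists x.
have nil_r := NilA_zero_set (Jac0_Nil0 _ (JacA_nil_ideal idI nilI Jr)).
have one0 := regular_nilpotent_trivial reg_r nil_r.
by apply: noreg; exists 0; split; [case: idI | apply: trivial_regular].
Qed.
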